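(* Let $d\ge2$, $p\ge1$, $k\ge1$. For each integer $m\ge1$, the function $$J_m(T):=N_{\ge m(p-1)+1}(T)\prod_{i=1}^{m-1}N_{\le i(p-1)}(T),\qquad T\in\mathcal{C}_k^{(d)},$$ lies in $\mathrm{span}\{\mathbf{1}_{\mathcal{S}}:\mathcal{S}\text{ a length-}p\text{ shuffle class in }\mathcal{C}_k^{(d)}\}$.
   Context: A $d$-Catalan tree is a rooted planar tree in which each vertex has $0$ or $d$ children; $\mathcal{C}_k^{(d)}$ is the set of those with $k$ internal vertices. $N_j(T)$ is the number of vertices at distance $j$ from the root, $N_{\le q}(T)=\sum_{0\le j\le q}N_j(T)$, $N_{\ge q}(T)=\sum_{j\ge q}N_j(T)$. For a path $(v_0,\dots,v_p)$ ($v_i$ a child of $v_{i-1}$) in $T$, $\mathrm{Sh}(T;v_0,\dots,v_p)$ is the set of trees obtained from $T$ by rearranging the $(d-1)p$ subtrees subtended by the siblings of $v_1,\dots,v_p$ among those positions; such sets are the length-$p$ shuffle classes. *)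

From HB Require Import structures.
From mathcomp Require Import all_boot all_order all_algebra.
From mathcomp Require Import boolp.
Set Implicit Arguments. Unset Strict Implicit. Unset Printing Implicit Defensive.
Import GRing.Theory.

(* Rooted planar trees: a vertex is the ordered list of its subtrees. *)
Inductive tree := Node of seq tree.
Definition leaf := Node [::].
Definition children (t : tree) := let: Node s := t in s.

Fixpoint tree_enc (t : tree) : GenTree.tree unit :=
  let: Node s := t in GenTree.Node 0 (map tree_enc s).
Fixpoint tree_dec (g : GenTree.tree unit) : tree :=
  match g with
  | GenTree.Leaf _ => leaf
  | GenTree.Node _ s => Node (map tree_dec s)
  end.
Lemma tree_encK : cancel tree_enc tree_dec.
Proof.
rewrite /cancel; fix IH 1; move=> [s] /=; congr Node.
elim: s => [|t s IHs] //=; by rewrite IH IHs.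
Qed.
HB.instance Definition _ := Countable.copy tree (can_type tree_encK).

Fixpoint is_dcat (d : nat) (t : tree) : bool :=
  let: Node s := t in ((size s == 0) || (size s == d)) && all (is_dcat d) s.
Fixpoint ninternal (t : tree) : nat :=
  let: Node s := t in (size s != 0) + sumn (map ninternal s).
Definition catalan (d k : nat) (t : tree) : bool := is_dcat d t && (ninternal t == k).

Fixpoint level (t : tree) (j : nat) : nat :=
  match t, j with
  | Node _, 0 => 1
  | Node s, j'.+1 => sumn (map (fun u => level u j') s)
  end.
Fixpoint height (t : tree) : nat :=
  let: Node s := t in if s is [::] then 0 else (foldr maxn 0 (map height s)).+1.
Definition Nle (t : tree) (q : nat) : nat := \sum_(0 <= j < q.+1) level t j.
(* levels beyond height t are empty, so this is sum_{j >= q} N_j(T) *)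
Definition Nge (t : tree) (q : nat) : nat := \sum_(q <= j < (height t).+1) level t j.

(* Vertices are addressed by words of child indices (0-based) from the root. *)
Fixpoint is_vertex (t : tree) (w : seq nat) : bool :=
  match w with
  | [::] => true
  | i :: w' => (i < size (children t)) && is_vertex (nth leaf (children t) i) w'
  end.
Fixpoint subtree (t : tree) (w : seq nat) : tree :=
  match w with
  | [::] => t
  | i :: w' => subtree (nth leaf (children t) i) w'
  end.
Fixpoint replace_at (t : tree) (w : seq nat) (u : tree) : tree :=
  match w with
  | [::] => u
  | i :: w' => Node (set_nth leaf (children t) i
                       (replace_at (nth leaf (children t) i) w' u))
  end.
Definition replace_all (t : tree) (pos : seq (seq nat)) (us : seq tree) : tree :=
  foldl (fun t' wu => replace_at t' wu.1 wu.2) t (zip pos us).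

(* A path (v_0,...,v_p) is given by the address a of v_0 and the child
   indices cs (size p), v_i = a ++ take i cs.  The positions of the siblings
   of v_1, ..., v_p : *)
Definition sib_positions (t : tree) (a cs : seq nat) : seq (seq nat) :=
  flatten [seq [seq (a ++ take i cs) ++ [:: j]
               | j <- iota 0 (size (children (subtree t (a ++ take i cs))))
               & j != nth 0 cs i]
          | i <- iota 0 (size cs)].
Definition is_path (t : tree) (a cs : seq nat) : bool := is_vertex t (a ++ cs).

(* T' \in Sh(T; v_0,...,v_p): obtained from T by rearranging the subtrees
   subtended by the siblings of v_1..v_p among those positions. *)
Definition in_shuffle (t : tree) (a cs : seq nat) (t' : tree) : Prop :=
  exists us : seq tree,
    perm_eq us [seq subtree t w | w <- sib_positions t a cs] /\
    t' = replace_all t (sib_positions t a cs) us.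

Definition shuffle_ind (t : tree) (a cs : seq nat) (t' : tree) : rat :=
  (`[< in_shuffle t a cs t' >])%:R.

Definition Jm (p m : nat) (t : tree) : nat :=
  Nge t (m * (p - 1) + 1) * \prod_(1 <= i < m) Nle t (i * (p - 1)).

From mathcomp Require Import all_boot all_algebra.
From mathcomp Require Import boolp zify.
Import GRing.Theory Num.Theory.
Set Implicit Arguments. Unset Strict Implicit. Unset Printing Implicit Defensive.

(* Fix a vertex w at depth q >= m(p-1)+1 and the path of length p ending at w.
   Shuffling along that path only permutes subtrees rooted at depths > q-p, so it
   preserves every N_j with j <= q-p+1, hence the product P(T) of the
   N_{<= i(p-1)}, i < m; and the shuffle classes partition the trees containing
   the path.  Weighting the indicator of the class of each such tree T0 in C_k
   by P(T0)/|class of T0 in C_k| therefore gives a function whose value at T is P(T) if w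
   is a vertex of T and 0 otherwise.  Summing over all addresses w of depth
   >= m(p-1)+1 counts each of the N_{>= m(p-1)+1}(T) deep vertices of T once. *)

Lemma pairwise_flatten_map (S T : eqType) (r : rel T) (g : S -> seq T) s :
  (forall x, x \in s -> pairwise r (g x)) ->
  pairwise (fun x y => allrel r (g x) (g y)) s -> pairwise r (flatten (map g s)).
Proof.
elim: s => [|x s IH] //= H /andP[hx hs].
rewrite pairwise_cat H ?mem_head // IH ?andbT //; last first.
  by move=> y ys; apply: H; rewrite in_cons ys orbT.
apply/allrelP => u v ux /flattenP [sv /mapP [y ys ->] vy].
exact: (allrelP (allP hx y ys)).
Qed.

Lemma pairwise_iota0 (r : rel nat) n : (forall i j, i < j < n -> r i j) ->
  pairwise r (iota 0 n).
Proof.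
move=> H; apply/(pairwiseP 0) => i j; rewrite !inE size_iota => ilt jlt ij.
by rewrite !nth_iota // !add0n; apply: H; rewrite ij.
Qed.

Lemma take_cat_nth (T : Type) (x0 : T) (s : seq T) i i' :
  i < i' -> i' <= size s ->
  take i' s = take i s ++ nth x0 s i :: drop i.+1 (take i' s).
Proof.
move=> ii' i's; rewrite -{1}(cat_take_drop i (take i' s)) take_takel ?(ltnW ii') //.
rewrite (drop_nth x0) ?nth_take // size_take.
by case: ifP => _ //; apply: leq_trans i's.
Qed.

Lemma foldr_maxn_le_sumn (T : eqType) (s : seq T) f g :
  (forall u, u \in s -> f u <= g u) ->
  foldr maxn 0 (map f s) <= sumn (map g s).
Proof.
elim: s => //= y r IHr H; rewrite geq_max; apply/andP; split.
  exact: leq_trans (H y (mem_head _ _)) (leq_addr _ _).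
by apply: leq_trans (IHr _) (leq_addl _ _) => u ur; apply: H; rewrite in_cons ur orbT.
Qed.

Fixpoint tuples (T : Type) (l : nat) (X : seq T) : seq (seq T) :=
  if l is l'.+1 then [seq x :: s | x <- X, s <- tuples l' X] else [:: [::]].

Lemma mem_tuples (T : eqType) l (X : seq T) s :
  size s = l -> all (mem X) s -> s \in tuples l X.
Proof.
elim: l s => [|l IH] [|x s] //= [sz] /andP[xX sX].
by apply/allpairsPdep; exists x, s; split => //; apply: IH.
Qed.

Lemma tree_ind_mem (P : tree -> Prop) :
  (forall s, (forall u, u \in s -> P u) -> P (Node s)) -> forall t, P t.
Proof.
move=> IH; fix F 1; case=> s; apply: IH.
(* not [by []] below: [done] would close the goal with the unguarded call [F v] *)
elim: s => [|u s IHs] v; first (rewrite in_nil => H; discriminate H).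
by rewrite in_cons => /orP[/eqP -> | /IHs]; [exact: F | exact].
Qed.

Definition incomparable (w v : seq nat) := ~~ prefix w v && ~~ prefix v w.

Lemma incomparable_sym : symmetric incomparable.
Proof. by move=> w v; rewrite /incomparable andbC. Qed.

Lemma is_vertex_cat t v v' :
  is_vertex t (v ++ v') = is_vertex t v && is_vertex (subtree t v) v'.
Proof. by elim: v t => [|i v IH] t //=; rewrite IH andbA. Qed.

Lemma subtree_replace_at t w u : subtree (replace_at t w u) w = u.
Proof. by elim: w t => [|i w IH] [s] //=; rewrite nth_set_nth /= eqxx IH. Qed.

Lemma subtree_replace_at_incomparable t w v u : incomparable w v ->
  subtree (replace_at t w u) v = subtree t v.
Proof.
elim: w t v => [|i w IH] [s] [|j v] //=; rewrite /incomparable /= ?andbF //.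
by rewrite nth_set_nth /=; have [->|//] := eqVneq j i; rewrite ?eqxx /=; apply: IH.
Qed.

Lemma replace_at_replace_at t w u u' :
  replace_at (replace_at t w u) w u' = replace_at t w u'.
Proof.
elim: w t => [|i w IH] [s] //=.
by rewrite set_set_nth eqxx nth_set_nth /= eqxx IH.
Qed.

Lemma replace_atC t w v u u' : incomparable w v ->
  replace_at (replace_at t w u) v u' = replace_at (replace_at t v u') w u.
Proof.
elim: w t v => [|i w IH] [s] [|j v] //=; rewrite /incomparable /= ?andbF //.
rewrite !nth_set_nth /=; have [<-|ne] := eqVneq j i.
  by rewrite ?eqxx /= => H; congr Node; rewrite [LHS]set_set_nth [RHS]set_set_nth eqxx IH.
by move=> _; congr Node; rewrite set_set_nth eq_sym (negbTE ne).
Qed.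

Lemma replace_at_subtree t w : is_vertex t w -> replace_at t w (subtree t w) = t.
Proof.
elim: w t => [|i w IH] [s] //= /andP[lis vw]; rewrite IH //; congr Node.
apply: (@eq_from_nth _ leaf); first by rewrite size_set_nth (maxn_idPr lis).
by move=> x _; rewrite nth_set_nth /=; case: eqP => // ->.
Qed.

Lemma replace_at_shape t w v u : is_vertex t w -> ~~ prefix w v ->
  is_vertex (replace_at t w u) v = is_vertex t v /\
  size (children (subtree (replace_at t w u) v)) = size (children (subtree t v)).
Proof.
elim: w t v => [|i w IH] [s] [|j v] //=.
  by move=> /andP[lis _] _; rewrite size_set_nth (maxn_idPr lis).
move=> /andP[lis vw]; rewrite size_set_nth (maxn_idPr lis) nth_set_nth /=.
by have [-> /(IH _ v vw) [-> ->]|//] := eqVneq j i.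
Qed.

Lemma level_replace_at t w u j : is_vertex t w -> j <= size w ->
  level (replace_at t w u) j = level t j.
Proof.
elim: w t j => [|i w IH] [s] [|j] //=; first by case: u.
move=> /andP[lis vw]; rewrite ltnS => jw; congr sumn.
apply: (@eq_from_nth _ 0); first by rewrite !size_map size_set_nth (maxn_idPr lis).
move=> x; rewrite size_map size_set_nth (maxn_idPr lis) => xs.
rewrite !(nth_map leaf) ?size_set_nth ?(maxn_idPr lis) // nth_set_nth /=.
by case: eqP => [->|] //; apply: IH.
Qed.

Lemma replace_all_cons t w pos u us :
  replace_all t (w :: pos) (u :: us) = replace_all (replace_at t w u) pos us.
Proof. by []. Qed.

Lemma subtree_replace_all_incomparable t pos us v :
  (forall x, x \in pos -> incomparable x v) ->
  subtree (replace_all t pos us) v = subtree t v.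
Proof.
elim: pos t us => [|w pos IH] t [|u us] //= H.
rewrite replace_all_cons IH ?subtree_replace_at_incomparable ?H ?mem_head //.
by move=> x xp; apply: H; rewrite in_cons xp orbT.
Qed.

Lemma vertex_replace_at_notprefix t w u v : is_vertex t w -> ~~ prefix w v ->
  is_vertex (replace_at t w u) v = is_vertex t v.
Proof. by move=> vw /(replace_at_shape u vw) []. Qed.

Lemma replace_all_shape t pos us v : pairwise incomparable pos ->
  all (is_vertex t) pos -> (forall x, x \in pos -> ~~ prefix x v) ->
  is_vertex (replace_all t pos us) v = is_vertex t v /\
  size (children (subtree (replace_all t pos us) v)) = size (children (subtree t v)).
Proof.
elim: pos t us => [|w pos IH] t [|u us] //= /andP[wp pp] /andP[vw vp] H.
rewrite replace_all_cons.
have [<- <-] := replace_at_shape u vw (H w (mem_head _ _)).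
apply: IH => //; last by move=> x xp; apply: H; rewrite in_cons xp orbT.
apply/allP => x xp; have /andP[nwx _] := allP wp x xp.
by rewrite vertex_replace_at_notprefix // (allP vp).
Qed.

Lemma level_replace_all t pos us j : pairwise incomparable pos ->
  all (is_vertex t) pos -> (forall x, x \in pos -> j <= size x) ->
  level (replace_all t pos us) j = level t j.
Proof.
elim: pos t us => [|w pos IH] t [|u us] //= /andP[wp pp] /andP[vw vp] H.
rewrite replace_all_cons IH //.
- by rewrite level_replace_at // H // mem_head.
- apply/allP => x xp; have /andP[nwx _] := allP wp x xp.
  by rewrite vertex_replace_at_notprefix // (allP vp).
- by move=> x xp; apply: H; rewrite in_cons xp orbT.
Qed.

Lemma map_subtree_replace_all t pos us : pairwise incomparable pos ->
  size us = size pos -> map (subtree (replace_all t pos us)) pos = us.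
Proof.
elim: pos t us => [|w pos IH] t [|u us] //= /andP[wp pp] [su].
rewrite replace_all_cons IH // subtree_replace_all_incomparable ?subtree_replace_at //.
by move=> x xp; rewrite incomparable_sym (allP wp).
Qed.

Lemma replace_at_replace_all t pos us w v : (forall x, x \in pos -> incomparable w x) ->
  replace_at (replace_all t pos us) w v = replace_all (replace_at t w v) pos us.
Proof.
elim: pos t us => [|x pos IH] t [|u us] H //=.
rewrite !replace_all_cons IH; last by move=> y yp; apply: H; rewrite in_cons yp orbT.
by rewrite replace_atC // incomparable_sym H // mem_head.
Qed.

Lemma replace_all_replace_all t pos us vs : pairwise incomparable pos ->
  size us = size pos -> size vs = size pos ->
  replace_all (replace_all t pos us) pos vs = replace_all t pos vs.
Proof.
elim: pos t us vs => [|w pos IH] t [|u us] [|v vs] //= /andP[wp pp] [su] [sv].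
rewrite !replace_all_cons replace_at_replace_all; last by move=> x xp; apply: (allP wp).
by rewrite replace_at_replace_at IH.
Qed.

Lemma replace_all_subtree t pos : all (is_vertex t) pos ->
  replace_all t pos (map (subtree t) pos) = t.
Proof.
elim: pos => [|w pos IH] //= /andP[vw vp].
by rewrite replace_all_cons replace_at_subtree // IH.
Qed.

Lemma is_vertex_take_path t a cs i : is_path t a cs -> is_vertex t (a ++ take i cs).
Proof.
by rewrite /is_path -{1}(cat_take_drop i cs) catA is_vertex_cat => /andP[].
Qed.

Section SiblingPositions.
Variables (t : tree) (a cs : seq nat).

Lemma mem_sib_positions x : x \in sib_positions t a cs -> exists i j,
  [/\ i < size cs, j < size (children (subtree t (a ++ take i cs))), j != nth 0 cs i
    & x = (a ++ take i cs) ++ [:: j]].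
Proof.
move=> /flattenP [sx /mapP [i ii ->]] /mapP [j]; rewrite mem_filter mem_iota /= add0n.
move=> /andP[jne jl] ->; exists i, j; split => //.
by move: ii; rewrite mem_iota add0n.
Qed.

Lemma sib_positions_deep x : x \in sib_positions t a cs -> size a < size x.
Proof.
by move=> /mem_sib_positions [i [j [_ _ _ ->]]]; rewrite !size_cat /= addn1 ltnS leq_addr.
Qed.

Lemma sib_positions_notprefix i x : i <= size cs -> x \in sib_positions t a cs ->
  ~~ prefix x (a ++ take i cs).
Proof.
move=> ics /mem_sib_positions [i' [j [i'cs _ jne ->]]].
case: (leqP i i') => hi.
  apply/negP => /size_prefix; rewrite !size_cat /= !size_take.
  by rewrite i'cs; case: ltnP => h; lia.
by rewrite (take_cat_nth 0 hi ics) catA prefix_catr //= eqxx /= (negbTE jne).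
Qed.

Lemma sib_positions_incomparable : pairwise incomparable (sib_positions t a cs).
Proof.
apply: pairwise_flatten_map.
  move=> i _; rewrite pairwise_map; apply: pairwise_filter.
  apply: pairwise_iota0 => j j' /andP[jj' _].
  rewrite /relpre /incomparable /= !prefix_catr // eqxx /= !andbT.
  by rewrite (ltn_eqF jj') (gtn_eqF jj').
apply: pairwise_iota0 => i i' /andP[ii' i'cs].
apply/allrelP => x y /mapP [j]; rewrite mem_filter => /andP[jne _] -> /mapP [j' _ ->].
rewrite (take_cat_nth 0 ii' (ltnW i'cs)) /incomparable -!catA /= !prefix_catr // !eqxx /=.
by rewrite (negbTE jne) eq_sym (negbTE jne).
Qed.

Hypothesis path_t : is_path t a cs.

Lemma sib_positions_vertex : all (is_vertex t) (sib_positions t a cs).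
Proof.
apply/allP => x /mem_sib_positions [i [j [_ jl _ ->]]].
by rewrite is_vertex_cat is_vertex_take_path //= jl.
Qed.

End SiblingPositions.

Section ShuffleClass.
Variables (t : tree) (a cs : seq nat).
Hypothesis path_t : is_path t a cs.
Let pos := sib_positions t a cs.

Lemma replace_all_sib_shape us i : i <= size cs ->
  is_vertex (replace_all t pos us) (a ++ take i cs) = is_vertex t (a ++ take i cs) /\
  size (children (subtree (replace_all t pos us) (a ++ take i cs))) =
  size (children (subtree t (a ++ take i cs))).
Proof.
move=> ics; apply: replace_all_shape.
- exact: sib_positions_incomparable.
- exact: sib_positions_vertex.
- by move=> x; apply: sib_positions_notprefix.
Qed.

Lemma sib_positions_replace_all us : sib_positions (replace_all t pos us) a cs = pos.
Proof.
rewrite /pos /sib_positions; congr flatten; apply/eq_in_map => i.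
by rewrite mem_iota add0n => /ltnW /(replace_all_sib_shape us) [_ ->].
Qed.

Lemma is_path_replace_all us : is_path (replace_all t pos us) a cs.
Proof.
have [+ _] := replace_all_sib_shape us (leqnn (size cs)).
by rewrite /is_path take_size => ->.
Qed.

Lemma in_shuffle_refl : in_shuffle t a cs t.
Proof.
exists (map (subtree t) pos); split => //.
by rewrite replace_all_subtree //; apply: sib_positions_vertex.
Qed.

Lemma in_shuffle_path t' : in_shuffle t a cs t' -> is_path t' a cs.
Proof. by move=> [us [_ ->]]; apply: is_path_replace_all. Qed.

Lemma in_shuffle_level t' j : in_shuffle t a cs t' -> j <= (size a).+1 ->
  level t' j = level t j.
Proof.
move=> [us [_ ->]] ja; apply: level_replace_all.
- exact: sib_positions_incomparable.
- exact: sib_positions_vertex.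
- by move=> x /sib_positions_deep; apply: leq_trans.
Qed.

(* Shuffling leaves the sibling positions [pos] in place, so the shuffles of a
   shuffle of [t] are the shuffles of [t]. *)
Lemma in_shuffle_class t' t'' : in_shuffle t a cs t' ->
  in_shuffle t' a cs t'' <-> in_shuffle t a cs t''.
Proof.
move=> [us [pus ->]]; have pos_inc := sib_positions_incomparable t a cs.
have sus : size us = size pos by rewrite (perm_size pus) size_map.
rewrite /in_shuffle sib_positions_replace_all map_subtree_replace_all //.
split=> -[vs [pvs ->]]; exists vs.
  rewrite replace_all_replace_all ?(perm_size pvs) //.
  by split=> //; apply: perm_trans pus.
split; first by apply: perm_trans pvs _; rewrite perm_sym.
by rewrite replace_all_replace_all // (perm_size pvs) size_map.
Qed.

End ShuffleClass.

Definition shuffle_rel (a cs : seq nat) : rel tree :=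
  fun t t' => is_path t a cs && `[< in_shuffle t a cs t' >].

Lemma shuffle_relxx a cs t : shuffle_rel a cs t t = is_path t a cs.
Proof.
rewrite /shuffle_rel; case: (boolP (is_path t a cs)) => //= pt.
by apply/asboolP; apply: in_shuffle_refl.
Qed.

Lemma shuffle_rel_sym a cs : symmetric (shuffle_rel a cs).
Proof.
suff sub t t' : shuffle_rel a cs t t' -> shuffle_rel a cs t' t.
  by move=> t t'; apply/idP/idP; apply: sub.
move=> /andP[pt /asboolP tt']; have pt' := in_shuffle_path pt tt'.
by rewrite /shuffle_rel pt'; apply/asboolP/(in_shuffle_class pt t tt')/in_shuffle_refl.
Qed.

Lemma shuffle_rel_trans a cs : transitive (shuffle_rel a cs).
Proof.
move=> t' t t'' /andP[pt /asboolP tt'] /andP[_ /asboolP t't''].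
by rewrite /shuffle_rel pt; apply/asboolP/(in_shuffle_class pt _ tt').
Qed.

Lemma shuffle_rel_level a cs t t' j : shuffle_rel a cs t t' -> j <= (size a).+1 ->
  level t' j = level t j.
Proof. by move=> /andP[pt /asboolP]; apply: in_shuffle_level. Qed.

Lemma height_child s u : u \in s -> height u < height (Node s).
Proof.
case: s => // x s.
rewrite -[height (Node _)]/(foldr maxn 0 (map height (x :: s))).+1 ltnS.
elim: (x :: s) => // y r IHr; rewrite in_cons => /orP[/eqP -> | /IHr ur] /=.
  exact: leq_maxl.
exact: leq_trans ur (leq_maxr _ _).
Qed.

Lemma height_le_ninternal t : height t <= ninternal t.
Proof.
elim/tree_ind_mem: t => -[|x s] IH //.
rewrite -[height (Node _)]/(foldr maxn 0 (map height (x :: s))).+1.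
rewrite -[ninternal (Node _)]/(sumn (map ninternal (x :: s))).+1 ltnS.
exact: foldr_maxn_le_sumn.
Qed.

Lemma height_catalan d k t : catalan d k t -> height t <= k.
Proof. by move=> /andP[_ /eqP <-]; apply: height_le_ninternal. Qed.

Lemma level_gt_height t j : height t < j -> level t j = 0.
Proof.
elim: j t => [|j IH] [s] //= hj; rewrite sumnE big_map big1_seq // => u /andP[_ us].
by apply: IH; rewrite -ltnS; apply: leq_trans (height_child us) hj.
Qed.

Fixpoint words (d q : nat) : seq (seq nat) :=
  if q is q'.+1 then [seq i :: w | i <- index_iota 0 d, w <- words d q'] else [:: [::]].

Lemma size_words d q w : w \in words d q -> size w = q.
Proof.
elim: q w => [|q IH] w /=; first by rewrite inE => /eqP ->.
by move=> /allpairsPdep [i [w' [_ w'q ->]]] /=; rewrite (IH _ w'q).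
Qed.

Lemma level_words d t q : is_dcat d t ->
  level t q = \sum_(w <- words d q) is_vertex t w.
Proof.
elim: q t => [|q IH] [s] /=; first by rewrite big_seq1.
move=> /andP[/orP[/eqP/size0nil -> | /eqP sd] all_dcat]; rewrite big_allpairs_dep /=.
  by rewrite big1 // => i _; rewrite big1.
rewrite sumnE big_map (big_nth leaf) sd /=; apply: eq_big_nat => i /andP[_ ilt].
by rewrite ilt IH //; apply: (allP all_dcat); apply: mem_nth; rewrite sd.
Qed.

Lemma Nge_words d k t q : catalan d k t ->
  Nge t q = \sum_(w <- flatten [seq words d j | j <- index_iota q k.+1]) is_vertex t w.
Proof.
move=> cat_t; rewrite big_flatten big_map /=.
under eq_bigr do rewrite -level_words ?(andP cat_t).1 //.
have hk : (height t).+1 <= k.+1 by rewrite ltnS (height_catalan cat_t).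
have level0 j : (height t).+1 <= j -> level t j = 0 by apply: level_gt_height.
rewrite /Nge; case: (leqP q (height t).+1) => hq.
  rewrite [RHS](@big_cat_nat _ _ _ (height t).+1) //=.
  rewrite [X in _ = _ + X]big1_seq ?addn0 // => j.
  by rewrite mem_index_iota => /andP[_ /andP[/level0]].
rewrite big_geq ?(ltnW hq) // big1_seq // => j; rewrite mem_index_iota.
by move=> /andP[_ /andP[/(leq_trans (ltnW hq)) /level0]].
Qed.

Fixpoint dcat_upto (d n : nat) : seq tree :=
  if n is n'.+1 then leaf :: [seq Node s | s <- tuples d (dcat_upto d n')] else [:: leaf].

Lemma mem_dcat_upto d n t : is_dcat d t -> height t <= n -> t \in dcat_upto d n.
Proof.
elim: n t => [|n IH] [[|x s]] dc ht; rewrite ?mem_head //= in_cons; apply/orP; right.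
apply: map_f; move: dc => /andP[/eqP sz all_dcat]; apply: mem_tuples => //.
apply/allP => u us; apply: IH; first exact: (allP all_dcat).
by rewrite -ltnS; apply: leq_trans (height_child us) ht.
Qed.

Definition catalan_enum d k := [seq t <- dcat_upto d k | catalan d k t].

Lemma mem_catalan_enum d k t : (t \in catalan_enum d k) = catalan d k t.
Proof.
rewrite mem_filter andb_idr // => cat_t.
by apply: mem_dcat_upto; [case/andP: cat_t | apply: height_catalan cat_t].
Qed.

Definition Nle_prod p m t := \prod_(1 <= i < m) Nle t (i * (p - 1)).

Lemma Nle_prod_level p m t t' n : (forall j, j <= n -> level t' j = level t j) ->
  (m - 1) * (p - 1) <= n -> Nle_prod p m t' = Nle_prod p m t.
Proof.
move=> eq_level hn; apply: eq_big_nat => i /andP[_ im].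
apply: eq_big_nat => j /andP[_ ji]; apply: eq_level.
have : i * (p - 1) <= (m - 1) * (p - 1) by apply: leq_mul => //; lia.
lia.
Qed.

Definition ancestor_path p (w : seq nat) : seq nat * seq nat :=
  (take (size w - p) w, drop (size w - p) w).

Lemma size_ancestor_path p m w : 0 < m -> m * (p - 1) + 1 <= size w ->
  size (ancestor_path p w).2 = p /\ (m - 1) * (p - 1) <= size (ancestor_path p w).1.
Proof.
move=> m_gt0 hw; have := leq_pmull (p - 1) m_gt0.
rewrite /= size_drop size_takel ?leq_subr // mulnBl mul1n; split; lia.
Qed.

Local Open Scope ring_scope.

Lemma sum_class_average (F : numFieldType) (T : eqType) (R : rel T) (f : T -> F)
    (L : seq T) x :
  symmetric R -> transitive R -> (forall y z, R y z -> f y = f z) -> x \in L ->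
  \sum_(y <- L) f y / (count (R y) L)%:R * (R y x)%:R = (R x x)%:R * f x.
Proof.
move=> Rsym Rtr f_class xL.
have Rxx y : R y x -> R x x by move=> yx; apply: (Rtr y); rewrite // Rsym.
have [xx|xNx] := boolP (R x x); last first.
  rewrite mul0r big1_seq // => y _.
  case: (boolP (R y x)) => [/Rxx|_]; last by rewrite mulr0.
  by rewrite (negbTE xNx).
have class_eq y : R y x -> R y =1 R x.
  by move=> yx z; apply/idP/idP; apply: Rtr; rewrite // Rsym.
transitivity (\sum_(y <- L) (R y x)%:R * (f x / (count (R x) L)%:R)).
  apply: eq_bigr => y _; case: (boolP (R y x)) => [yx|_]; last by rewrite mulr0 mul0r.
  by rewrite (eq_count (class_eq y yx)) (f_class y x yx) mulr1 mul1r.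
have count_sym : (\sum_(y <- L) (R y x : nat))%N = count (R x) L.
  rewrite (eq_count (Rsym x)) -sum1_count [RHS]big_mkcond /=.
  by apply: eq_bigr => y _; case: (R y x).
rewrite -mulr_suml -natr_sum count_sym mulrCA mulfV ?mulr1 ?mul1r //.
by rewrite pnatr_eq0 -lt0n -has_count; apply/hasP; exists x.
Qed.

Lemma sum_shuffle_average (L : seq tree) (f : tree -> rat) a cs T :
  (forall t t', (forall j, (j <= (size a).+1)%N -> level t' j = level t j) ->
     f t' = f t) ->
  T \in L ->
  \sum_(T0 <- L | is_path T0 a cs)
     f T0 / (count (shuffle_rel a cs T0) L)%:R * shuffle_ind T0 a cs T
  = (is_path T a cs)%:R * f T.
Proof.
move=> f_level TL.
have f_class t t' : shuffle_rel a cs t t' -> f t = f t'.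
  by move=> tt'; symmetry; apply: f_level => j; exact: shuffle_rel_level tt'.
rewrite -(@shuffle_relxx a cs T).
rewrite -(sum_class_average (@shuffle_rel_sym a cs) (@shuffle_rel_trans a cs) f_class TL).
rewrite big_mkcond; apply: eq_bigr => T0 _.
by rewrite /shuffle_ind /shuffle_rel; case: (is_path T0 a cs); rewrite //= mulr0.
Qed.

Theorem corollary6p3 (d p k m : nat) :
  (2 <= d)%N -> (1 <= p)%N -> (1 <= k)%N -> (1 <= m)%N ->
  exists cls : seq (rat * (tree * (seq nat * seq nat))),
    (forall c, c \in cls ->
       [/\ catalan d k c.2.1, is_path c.2.1 c.2.2.1 c.2.2.2
         & size c.2.2.2 = p]) /\
    (forall T : tree, catalan d k T ->
       (Jm p m T)%:R = \sum_(c <- cls) c.1 * shuffle_ind c.2.1 c.2.2.1 c.2.2.2 T).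
Proof.
move=> _ p_gt0 _ m_gt0.
set L := catalan_enum d k.
set W := flatten [seq words d q | q <- index_iota (m * (p - 1) + 1) k.+1].
have size_W w : w \in W -> (m * (p - 1) + 1 <= size w)%N.
  move=> /flattenP [_ /mapP [q + ->] /size_words ->].
  by rewrite mem_index_iota => /andP[].
exists [seq ((Nle_prod p m T0)%:R / (count (shuffle_rel ac.1 ac.2 T0) L)%:R, (T0, ac))
       | ac <- map (ancestor_path p) W, T0 <- [seq T0 <- L | is_path T0 ac.1 ac.2]].
split.
  move=> c /allpairsPdep [_ [T0 [/mapP [w /size_W wW ->] + ->]]].
  rewrite mem_filter mem_catalan_enum => /andP[pT0 cT0]; split => //.
  by case: (size_ancestor_path m_gt0 wW).
move=> T cT; rewrite big_allpairs_dep big_map /=.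
under eq_big_seq => w /size_W wW.
  rewrite big_filter (sum_shuffle_average (f := fun t => (Nle_prod p m t)%:R)).
  - rewrite /is_path cat_take_drop; over.
  - move=> t t' /Nle_prod_level -> //.
    by case: (size_ancestor_path m_gt0 wW) => _ /leq_trans; apply.
  - by rewrite mem_catalan_enum.
by rewrite -mulr_suml -natr_sum -natrM /Jm (Nge_words _ cT).
Qed.
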